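(* Let $A$ be a finite non-empty alphabet and $\mathbf a,\mathbf b,\mathbf c,\mathbf d\in A^+$. If $\mathbf a:\mathbf b::_{SY}\mathbf c:\mathbf d$, then $\mathbf a:\mathbf b::\mathbf c:\mathbf d$ holds in $(A^+,\cdot,A^+)$.
   Context: $A^+$ is the set of non-empty finite words over $A$. $\mathbf a:\mathbf b::_{SY}\mathbf c:\mathbf d$ means: $\mathbf a=a_1\ldots a_n$, $\mathbf b=b_1\ldots b_n$, $\mathbf c=c_1\ldots c_n$, $\mathbf d=d_1\ldots d_n$ for some letters $a_i,b_i,c_i,d_i\in A$ and $n\ge0$ such that for every $1\le i\le n$, ($a_i=b_i$ and $c_i=d_i$) or ($a_i=c_i$ and $b_i=d_i$). $(A^+,\cdot,A^+)$ is the algebra with universe $A^+$, concatenation, and every non-empty word as a constant. Terms are built from a denumerable variable set, concatenation and these constants; $X(s)$ is the set of variables of $s$. A justification is a pair $s\to t$ with $X(t)\subseteq X(s)$. $\uparrow(\mathbf a\to\mathbf b)$ is the set of justifications $s\to t$ with $\mathbf a=s(\mathbf o)$, $\mathbf b=t(\mathbf o)$ for some tuple $\mathbf o$ over $A^+$; $\uparrow(\mathbf a\to\mathbf b:\!\cdot\,\mathbf c\to\mathbf d):=\uparrow(\mathbf a\to\mathbf b)\cap\uparrow(\mathbf c\to\mathbf d)$. A justification is trivial if it lies in all sets $\uparrow(\mathbf a'\to\mathbf b':\!\cdot\,\mathbf c'\to\mathbf d')$. $\mathbf a\to\mathbf b:\!\cdot\,\mathbf c\to\mathbf d$ holds iff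 either (i) all justifications in $\uparrow(\mathbf a\to\mathbf b)\cup\uparrow(\mathbf c\to\mathbf d)$ are trivial, or (ii) $J_{\mathbf d}:=\uparrow(\mathbf a\to\mathbf b:\!\cdot\,\mathbf c\to\mathbf d)$ contains a non-trivial justification and for every $\mathbf d'$, $J_{\mathbf d}\subseteq J_{\mathbf d'}$ implies $J_{\mathbf d'}$ contains a non-trivial justification and $J_{\mathbf d'}\subseteq J_{\mathbf d}$ (ignoring trivial justifications). $\mathbf a:\mathbf b::\mathbf c:\mathbf d$ iff $\mathbf a\to\mathbf b:\!\cdot\,\mathbf c\to\mathbf d$, $\mathbf b\to\mathbf a:\!\cdot\,\mathbf d\to\mathbf c$, $\mathbf c\to\mathbf d:\!\cdot\,\mathbf a\to\mathbf b$, $\mathbf d\to\mathbf c:\!\cdot\,\mathbf b\to\mathbf a$ all hold. *)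

From mathcomp Require Import all_boot.
Set Implicit Arguments. Unset Strict Implicit. Unset Printing Implicit Defensive.

(* Terms of the algebra (A^+, ., A^+): variables (indexed by nat), constants
   (every non-empty word, encoded as head letter + tail word), concatenation. *)
Inductive term (A : Type) : Type :=
| TVar : nat -> term A
| TCst : A -> seq A -> term A
| TCat : term A -> term A -> term A.

Arguments TVar {A} _.

Fixpoint tvars (A : Type) (s : term A) : seq nat :=
  match s with
  | TVar n => [:: n]
  | TCst _ _ => [::]
  | TCat s1 s2 => tvars s1 ++ tvars s2
  end.

Fixpoint teval (A : Type) (o : nat -> seq A) (s : term A) : seq A :=
  match s with
  | TVar n => o n
  | TCst x w => x :: w
  | TCat s1 s2 => teval o s1 ++ teval o s2
  end.

Section Analogy.
Variable A : eqType.

Definition justification := (term A * term A)%type.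

Definition is_just (j : justification) : Prop :=
  {subset tvars j.2 <= tvars j.1}.

Definition up (a b : seq A) (j : justification) : Prop :=
  is_just j /\
  exists o : nat -> seq A, (forall n, o n != [::]) /\
    teval o j.1 = a /\ teval o j.2 = b.

Definition up2 (a b c d : seq A) (j : justification) : Prop :=
  up a b j /\ up c d j.

Definition trivial_just (j : justification) : Prop :=
  forall a' b' c' d' : seq A, a' != [::] -> b' != [::] -> c' != [::] ->
    d' != [::] -> up2 a' b' c' d' j.

Definition arrow_prop (a b c d : seq A) : Prop :=
  (forall j, up a b j \/ up c d j -> trivial_just j)
  \/
  ((exists j, up2 a b c d j /\ ~ trivial_just j) /\
   forall d' : seq A, d' != [::] ->
     (forall j, up2 a b c d j -> ~ trivial_just j -> up2 a b c d' j) ->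
     (exists j, up2 a b c d' j /\ ~ trivial_just j) /\
     (forall j, up2 a b c d' j -> ~ trivial_just j -> up2 a b c d j)).

Definition analogy (a b c d : seq A) : Prop :=
  arrow_prop a b c d /\ arrow_prop b a d c /\
  arrow_prop c d a b /\ arrow_prop d c b a.

Fixpoint sy (a b c d : seq A) : Prop :=
  match a, b, c, d with
  | [::], [::], [::], [::] => True
  | x :: a', y :: b', z :: c', w :: d' =>
      ((x = y /\ z = w) \/ (x = z /\ y = w)) /\ sy a' b' c' d'
  | _, _, _, _ => False
  end.

End Analogy.

(* A justification [s -> t] whose source term [s] has exactly as many leaves
   as the word [a] it evaluates to assigns a single letter to every variable,
   so [s] recovers the assignment from [a] and [t] then yields a unique
   target.  Hence [x -> x] and [x -> xx] share no justification, and no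
   justification is trivial.  From [a : b ::_SY c : d] one builds, letter by
   letter, a justification with [size a] leaves lying in both
   [up (a -> b)] and [up (c -> d)]: a shared variable where [x = y] and
   [z = w], and the constant pair [x -> y] otherwise (then [x = z], [y = w]).
   It pins down [d], which gives clause (ii) of [a -> b :. c -> d]; the other
   three arrows follow by the symmetries of [::_SY]. *)

From mathcomp Require Import all_boot.
From mathcomp Require Import zify.
Set Implicit Arguments. Unset Strict Implicit.

Section Justifications.
Variable A : eqType.

Fixpoint tleaves (s : term A) : nat :=
  if s is TCat s1 s2 then tleaves s1 + tleaves s2 else 1.

Lemma tleaves_gt0 (s : term A) : 0 < tleaves s.
Proof. by elim: s => //= s1 IH1 s2 _; rewrite addn_gt0 IH1. Qed.

Lemma tleaves_le_size (o : nat -> seq A) (s : term A) :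
  (forall n, o n != [::]) -> tleaves s <= size (teval o s).
Proof.
move=> o_nil; elim: s => [n|x w|s1 IH1 s2 IH2] //=.
- by rewrite lt0n size_eq0.
- by rewrite size_cat leq_add.
Qed.

Lemma eq_in_teval (o1 o2 : nat -> seq A) (t : term A) :
  {in tvars t, o1 =1 o2} -> teval o1 t = teval o2 t.
Proof.
elim: t => [n|x w|s1 IH1 s2 IH2] //= eq_o.
- by apply: eq_o; rewrite inE.
- by rewrite IH1 ?IH2 // => n sn; apply: eq_o; rewrite mem_cat sn ?orbT.
Qed.

Lemma teval_tight_inj (o1 o2 : nat -> seq A) (s : term A) :
  (forall n, o1 n != [::]) -> (forall n, o2 n != [::]) ->
  size (teval o1 s) = tleaves s -> teval o1 s = teval o2 s ->
  {in tvars s, o1 =1 o2}.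
Proof.
move=> o1_nil o2_nil; elim: s => [n|//|s1 IH1 s2 IH2] /=.
  by move=> _ eq_o m; rewrite inE => /eqP ->.
move=> tight eq_o.
have le11 := tleaves_le_size s1 o1_nil; have le12 := tleaves_le_size s2 o1_nil.
have le21 := tleaves_le_size s1 o2_nil; have le22 := tleaves_le_size s2 o2_nil.
have := congr1 size eq_o; rewrite !size_cat in tight * => tight_o2.
have tight1 : size (teval o1 s1) = tleaves s1 by lia.
have tight2 : size (teval o1 s2) = tleaves s2 by lia.
move/eqP: eq_o; rewrite eqseq_cat; last by lia.
case/andP=> /eqP eq1 /eqP eq2 n; rewrite mem_cat => /orP[].
- exact: IH1.
- exact: IH2.
Qed.

Lemma up_tleaves (a b : seq A) (j : justification A) :
  up a b j -> tleaves j.1 <= size a.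
Proof. by case=> _ [o [o_nil [<- _]]]; apply: tleaves_le_size. Qed.

Lemma up_tight_functional (a b b' : seq A) (j : justification A) :
  size a = tleaves j.1 -> up a b j -> up a b' j -> b = b'.
Proof.
move=> tight [jj [o1 [o1_nil [ea <-]]]] [_ [o2 [o2_nil [ea' <-]]]].
apply: eq_in_teval => n /jj; apply: teval_tight_inj => //; first by rewrite ea.
by rewrite ea ea'.
Qed.

Lemma not_trivial_just (x : A) (j : justification A) : ~ trivial_just j.
Proof.
move=> triv.
have [up_xx _] := triv [:: x] [:: x] [:: x] [:: x] isT isT isT isT.
have [up_xxx _] := triv [:: x] [:: x; x] [:: x] [:: x] isT isT isT isT.
have tight : size [:: x] = tleaves j.1.
  by apply/eqP; rewrite eqn_leq tleaves_gt0 (up_tleaves up_xx).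
by have := up_tight_functional tight up_xx up_xxx.
Qed.

Lemma arrow_prop_functional (a b c d : seq A) (j : justification A) :
  up2 a b c d j -> ~ trivial_just j -> (forall d', up c d' j -> d' = d) ->
  arrow_prop a b c d.
Proof.
move=> j_up j_nt d_uniq; right; split; first by exists j.
move=> d' _ /(_ j j_up j_nt)[_ /d_uniq ->].
by split; [exists j | move=> j' ? _].
Qed.

End Justifications.

Section SYAnalogy.
Variable A : countType.

Lemma sy_size (a b c d : seq A) : sy a b c d -> size a = size c.
Proof.
by elim: a b c d => [|x a IH] [|y b] [|z c] [|w d] //= [_ /IH ->].
Qed.

Lemma sy_sym (a b c d : seq A) :
  sy a b c d -> [/\ sy b a d c, sy c d a b & sy d c b a].
Proof.
elim: a b c d => [|x a IH] [|y b] [|z c] [|w d] //= [xyzw /IH[s1 s2 s3]].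
do !split=> //; case: xyzw => -[-> ->]; by [left | right].
Qed.

(* The variable standing for the letter pair [(x, z)] is [pickle (x, z)]:
   all positions carrying the same pair share one variable. *)
Definition sy_leaf (x y z w : A) : justification A :=
  if (x == y) && (z == w) then (TVar (pickle (x, z)), TVar (pickle (x, z)))
  else (TCst x [::], TCst y [::]).

Fixpoint sy_just (x y z w : A) (a b c d : seq A) : justification A :=
  let l := sy_leaf x y z w in
  if (a, b, c, d) is (x' :: a', y' :: b', z' :: c', w' :: d') then
    let r := sy_just x' y' z' w' a' b' c' d' in (TCat l.1 r.1, TCat l.2 r.2)
  else l.

Definition letter_assign (f : A * A -> A) (x0 : A) (n : nat) : seq A :=
  [:: oapp f x0 (unpickle n)].

Lemma letter_assign_pickle (f : A * A -> A) (x0 : A) (p : A * A) :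
  letter_assign f x0 (pickle p) = [:: f p].
Proof. by rewrite /letter_assign pickleK. Qed.

Section Evaluation.
Variable x0 : A.
Let oa := letter_assign fst x0.
Let oc := letter_assign snd x0.

Lemma teval_sy_leaf (x y z w : A) :
  (x = y /\ z = w) \/ (x = z /\ y = w) ->
  [/\ teval oa (sy_leaf x y z w).1 = [:: x], teval oa (sy_leaf x y z w).2 = [:: y],
      teval oc (sy_leaf x y z w).1 = [:: z] & teval oc (sy_leaf x y z w).2 = [:: w]].
Proof.
rewrite /sy_leaf; case: ifP => [/andP[/eqP <- /eqP <-] _|/negP ne [[xy zw]|[-> ->]] //].
  by rewrite /= /oa /oc !letter_assign_pickle.
by case: ne; rewrite xy zw !eqxx.
Qed.

Lemma teval_sy_just (x y z w : A) (a b c d : seq A) :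
  sy (x :: a) (y :: b) (z :: c) (w :: d) ->
  [/\ teval oa (sy_just x y z w a b c d).1 = x :: a,
      teval oa (sy_just x y z w a b c d).2 = y :: b,
      teval oc (sy_just x y z w a b c d).1 = z :: c
    & teval oc (sy_just x y z w a b c d).2 = w :: d].
Proof.
elim: a b c d x y z w => [|x' a IH] [|y' b] [|z' c] [|w' d] x y z w //=
  [/teval_sy_leaf[-> -> -> ->]] // s.
by have [-> -> -> ->] := IH _ _ _ _ _ _ _ s.
Qed.

End Evaluation.

Lemma tleaves_sy_leaf (x y z w : A) : tleaves (sy_leaf x y z w).1 = 1.
Proof. by rewrite /sy_leaf; case: ifP. Qed.

Lemma tvars_sy_leaf (x y z w : A) :
  tvars (sy_leaf x y z w).2 = tvars (sy_leaf x y z w).1.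
Proof. by rewrite /sy_leaf; case: ifP. Qed.

Lemma tleaves_sy_just (x y z w : A) (a b c d : seq A) :
  sy (x :: a) (y :: b) (z :: c) (w :: d) ->
  tleaves (sy_just x y z w a b c d).1 = (size a).+1.
Proof.
elim: a b c d x y z w => [|x' a IH] [|y' b] [|z' c] [|w' d] x y z w //= [_];
  by rewrite tleaves_sy_leaf // => /IH ->.
Qed.

Lemma tvars_sy_just (x y z w : A) (a b c d : seq A) :
  tvars (sy_just x y z w a b c d).2 = tvars (sy_just x y z w a b c d).1.
Proof.
elim: a b c d x y z w => [|x' a IH] [|y' b] [|z' c] [|w' d] x y z w /=;
  by rewrite tvars_sy_leaf ?IH.
Qed.

Lemma sy_arrow_prop (a b c d : seq A) :
  a != [::] -> sy a b c d -> arrow_prop a b c d.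
Proof.
case: a b c d => [//|x a] [|y b] [|z c] [|w d] // _ s.
set j := sy_just x y z w a b c d.
have [ea eb ec ed] := teval_sy_just x s.
have j_just : is_just j by rewrite /is_just tvars_sy_just.
have j_up : up2 (x :: a) (y :: b) (z :: c) (w :: d) j.
  by split; split=> //; [exists (letter_assign fst x) | exists (letter_assign snd x)].
apply: (arrow_prop_functional j_up (not_trivial_just x (j:=j))) => d' d'_up.
apply: up_tight_functional d'_up j_up.2.
by rewrite (tleaves_sy_just s) -(sy_size s).
Qed.

End SYAnalogy.

Theorem mainTheorem16 (A : finType) (hA : 0 < #|A|) (a b c d : seq A) :
  a != [::] -> b != [::] -> c != [::] -> d != [::] ->
  sy a b c d -> analogy a b c d.
Proof.
move=> a0 b0 c0 d0 s; have [s_ba s_cd s_dc] := sy_sym s.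
by do !split; apply: sy_arrow_prop.
Qed.
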